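(* Let $G$ and $T$ be graphs of order $n$, where $T$ is a tree. If $3\Delta(G)+\ell(T)-2<n$, then $G$ and $T$ pack.
   Context: All graphs are finite and simple; $\Delta(G)$ is the maximum degree of $G$ and $\ell(T)$ is the number of leaves (vertices of degree $1$) of $T$. For graphs $G$ and $H$ with $|V(G)|\ge |V(H)|$, we say $G$ and $H$ pack if there is an injective function $f:V(H)\to V(G)$ such that for every edge $xy\in E(H)$, $f(x)f(y)\notin E(G)$. *)

From mathcomp Require Import all_boot all_order.
Set Implicit Arguments. Unset Strict Implicit. Unset Printing Implicit Defensive.

Definition simple_graph (V : finType) (e : rel V) : Prop :=
  symmetric e /\ irreflexive e.

Definition nbhd (V : finType) (e : rel V) (v : V) : {set V} := [set u | e v u].
Definition deg (V : finType) (e : rel V) (v : V) : nat := #|nbhd e v|.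

Definition max_deg (V : finType) (e : rel V) : nat := \max_(v : V) deg e v.

Definition edges (V : finType) (e : rel V) : {set {set V}} :=
  [set [set x; y] | x in V, y in V & e x y].

Definition leaves (V : finType) (e : rel V) : nat := #|[set v : V | deg e v == 1]|.

Definition connected_graph (V : finType) (e : rel V) : Prop :=
  forall x y : V, connect e x y.

(* a tree: connected acyclic graph, i.e. connected with |V| - 1 edges *)
Definition is_tree (V : finType) (e : rel V) : Prop :=
  simple_graph e /\ connected_graph e /\ #|edges e| = #|V| - 1.

Definition pack (V W : finType) (eG : rel V) (eH : rel W) : Prop :=
  exists f : W -> V, injective f /\
    forall x y : W, eH x y -> ~~ eG (f x) (f y).

(* Embed T into the complement of G one vertex at a time, always adding a vertex u
   with at most one neighbour p among the vertices S already placed; such a u exists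
   because T restricted to S is a forest.  If u does have a neighbour p, give u the
   image of some z and z the old image of u.  This keeps the embedding valid unless z
   is blocked: z = p, or f z is adjacent to f p (at most Delta vertices), or z <> u is
   a T-neighbour of some y with f y adjacent to f u.  The last kind numbers at most
   sum_y deg_T y - 1 <= 2 Delta + l - 3, since a tree has few vertices of large degree
   compared with its leaves.  So at most 3 Delta + l - 2 < n vertices are blocked. *)

From mathcomp Require Import all_boot all_order perm zify.
Set Implicit Arguments. Unset Strict Implicit. Unset Printing Implicit Defensive.

Section Graphs.
Variables (W : finType) (e : rel W).

Definition edges_in (S : {set W}) : {set {set W}} := [set E in edges e | E \subset S].

Lemma edges_in_setT : edges_in [set: W] = edges e.
Proof. by apply/setP => E; rewrite inE subsetT andbT. Qed.

Lemma mem_edges x y : e x y -> [set x; y] \in edges e.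
Proof. by move=> exy; apply/imset2P; exists x y; rewrite ?inE. Qed.

Lemma mem_edges_in (S : {set W}) x y :
  x \in S -> y \in S -> e x y -> [set x; y] \in edges_in S.
Proof. by move=> xS yS exy; rewrite inE mem_edges //= subUset !sub1set xS. Qed.

Hypothesis eirr : irreflexive e.

(* Each edge [set a; b] of S is counted by the two ordered pairs (a, b) and (b, a). *)
Lemma sum_card_nbhdI_le (S : {set W}) :
  \sum_(v in S) #|nbhd e v :&: S| <= 2 * #|edges_in S|.
Proof.
pose P (x : W * W) := [&& x.1 \in S, x.2 \in S & e x.1 x.2].
have -> : \sum_(v in S) #|nbhd e v :&: S| = #|[set x | P x]|.
  rewrite -sum1_card (partition_big fst (mem S)) /=; last first.
    by move=> [a b]; rewrite inE => /and3P[].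
  apply: eq_bigr => v vS; rewrite -sum1_card (reindex (pair v)) /=; last first.
    by exists snd => [w _ | [a b]]; rewrite // inE => /andP[_ /eqP <-].
  by apply: eq_bigl => w; rewrite !inE /P /= vS eqxx andbT andbC.
rewrite -sum1_card (partition_big (fun x => [set x.1; x.2]) (mem (edges_in S))) /=;
  last by move=> [a b]; rewrite inE => /and3P[aS bS eab]; apply: mem_edges_in.
rewrite mulnC -sum_nat_const; apply: leq_sum => E.
rewrite inE => /andP[/imset2P[a b _ eab ->] _]; rewrite sum1_card.
apply: (@leq_trans #|[set (a, b); (b, a)]|); last by rewrite cards2; case: (_ != _).
apply: subset_leq_card; apply/subsetP => -[x y]; rewrite !inE /=.
case/andP; rewrite inE /P /= => /and3P[_ _ exy] /eqP xyE.
have: (x \in [set a; b]) && (y \in [set a; b]) by rewrite -xyE !inE !eqxx orbT.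
rewrite !inE => /andP[/orP[] /eqP xE /orP[] /eqP yE]; subst x y;
  by rewrite ?eqxx ?orbT //; rewrite eirr in exy.
Qed.

Lemma sum_deg_le : \sum_v deg e v <= 2 * #|edges e|.
Proof.
rewrite -edges_in_setT; apply: leq_trans (sum_card_nbhdI_le _).
by apply/eq_leq/eq_big => [v | v _]; rewrite ?inE ?setIT.
Qed.

Hypothesis conn : connected_graph e.

Lemma deg_gt0 v : 1 < #|W| -> 0 < deg e v.
Proof.
move=> W_gt1; have [w wv] : exists w, w != v.
  apply/existsP; apply: contraTT W_gt1 => /existsPn all_v; rewrite -leqNgt.
  by apply/fintype_le1P => w u; move: (all_v w) (all_v u); rewrite !negbK => /eqP-> /eqP->.
have /connectP[[|z p] /= evp wE] := conn v w; first by rewrite wE eqxx in wv.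
by apply/card_gt0P; exists z; rewrite inE; case/andP: evp.
Qed.

Lemma connect_crossing (S : {set W}) x y : x \in S -> y \notin S ->
  exists a b, [/\ a \in S, b \notin S & e a b].
Proof.
have /connectP[p] := conn x y; elim: p x => [|z p IH] x /=; first by move=> _ -> ->.
case/andP=> exz pz lastE xS; have [zS|zS] := boolP (z \in S).
  exact: IH pz lastE zS.
by exists x, z.
Qed.

Lemma card_setC_le_edges_out (S : {set W}) :
  S != set0 -> #|~: S| <= #|edges e :\: edges_in S|.
Proof.
have [k] := ubnP #|~: S|; elim: k S => // k IH S ltSk /set0Pn[x xS].
have [/eqP->|/set0Pn[y]] := boolP (~: S == set0); first by rewrite cards0.
rewrite inE => yS; have [a [b [aS bS eab]]] := connect_crossing xS yS.
have cardC : #|~: S| = #|~: (b |: S)|.+1.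
  by rewrite (cardsD1 b) inE bS add1n setCU setIC -setDE.
have bS_neq0 : b |: S != set0 by apply/set0Pn; exists b; rewrite setU11.
rewrite cardC in ltSk; rewrite cardC; apply: leq_ltn_trans (IH _ ltSk bS_neq0) _.
apply: proper_card; apply/properP; split.
  apply/subsetP => E; rewrite !inE => /andP[+ Ee]; rewrite Ee /= andbT.
  by apply: contra => /subsetP sES; apply/subsetP => z /sES; apply: setU1r.
by exists [set a; b]; rewrite !inE mem_edges ?subUset ?sub1set ?inE ?aS ?bS ?eqxx ?orbT.
Qed.

Hypothesis ecard : #|edges e| = #|W| - 1.

Lemma card_edges_in_lt (S : {set W}) : S != set0 -> #|edges_in S| < #|S|.
Proof.
move=> S_neq0; have := card_setC_le_edges_out S_neq0.
have sub : edges_in S \subset edges e by apply/subsetP => E; rewrite inE => /andP[].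
have S_gt0 : 0 < #|S| by rewrite card_gt0.
have := cardsID (edges_in S) (edges e); rewrite (setIidPr sub) ecard -(cardsC S).
lia.
Qed.

Lemma exists_pendant_in (S : {set W}) : S != set0 ->
  exists2 u, u \in S & #|nbhd e u :&: S| <= 1.
Proof.
move=> S_neq0; apply/exists_inP; apply: contraLR (card_edges_in_lt S_neq0).
move=> /exists_inPn deg_ge2; rewrite -leqNgt -(leq_pmul2l (isT : 0 < 2)).
apply: leq_trans (sum_card_nbhdI_le S); rewrite mulnC -sum_nat_const.
by apply: leq_sum => v /deg_ge2; rewrite -ltnNge.
Qed.

(* Outside B every vertex has degree at least 2, except for the leaves. *)
Lemma sum_deg_in_le (B : {set W}) : 1 < #|W| ->
  \sum_(v in B) deg e v + 2 <= 2 * #|B| + leaves e.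
Proof.
move=> W_gt1.
have pointwise v : (if v \in B then deg e v else 0) + 2
                   <= deg e v + (v \in B) * 2 + (deg e v == 1).
  by have := deg_gt0 v W_gt1; case: (v \in B); case: (deg e v) => [|[|d]] //= _; lia.
have cardB : \sum_v (v \in B) * 2 = #|B| * 2.
  by rewrite -sum1_card [in RHS]big_mkcond big_distrl; apply: eq_bigr => v _; case: (v \in B).
have leavesE : \sum_v (deg e v == 1 : nat) = leaves e.
  by rewrite /leaves -sum1_card [in RHS]big_mkcond; apply: eq_bigr => v _; rewrite inE.
have cardW : \sum_(v : W) 2 = #|W| * 2 by rewrite sum_nat_const.
have := sum_deg_le; rewrite ecard.
have := leq_sum (index_enum W) (fun v (_ : true) => pointwise v).
rewrite !big_split /= -big_mkcond cardB leavesE cardW.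
(* Naming these lets lia see through differently elaborated copies of the same terms. *)
set sB := \sum_(v in B) deg e v; set n := #|W|.
lia.
Qed.
End Graphs.

Lemma card_preimset_le (aT rT : finType) (f : aT -> rT) (A : {set rT}) :
  injective f -> #|f @^-1: A| <= #|A|.
Proof.
by move=> injf; rewrite -(card_imset _ injf) subset_leq_card // sub_imset_pre.
Qed.

Lemma card_bigcup_le (T I : finType) (P : pred I) (F : I -> {set T}) :
  #|\bigcup_(i | P i) F i| <= \sum_(i | P i) #|F i|.
Proof.
apply: (big_ind2 (fun (A : {set T}) m => #|A| <= m)) => [|A m B k leAm leBk|//].
  by rewrite cards0.
by rewrite (leq_trans (leq_card_setU A B)) ?leq_add.
Qed.

Section Packing.
Variables (V W : finType) (eG : rel V) (eT : rel W).

Definition packs_on (S : {set W}) (f : W -> V) :=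
  injective f /\ {in S &, forall x y, eT x y -> ~~ eG (f x) (f y)}.

Lemma packs_on_set0 : #|W| <= #|V| -> exists f, packs_on set0 f.
Proof.
move=> leWV; exists (fun x => enum_val (widen_ord leWV (enum_rank x))).
by split=> [x y /enum_val_inj[]/val_inj/enum_rank_inj | x y]; rewrite ?inE.
Qed.

Hypotheses (Gsym : symmetric eG) (Tsym : symmetric eT) (Tirr : irreflexive eT).

Lemma packs_on_setU1_isolated (S : {set W}) (u : W) (f : W -> V) :
  {in S, forall y, ~~ eT u y} -> packs_on S f -> packs_on (u |: S) f.
Proof.
move=> u_isol [injf packS]; split=> // x y /setU1P[-> | xS] /setU1P[-> | yS].
- by rewrite Tirr.
- by rewrite (negbTE (u_isol _ yS)).
- by rewrite Tsym (negbTE (u_isol _ xS)).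
- exact: packS.
Qed.

Lemma packs_on_setU1_swap (S : {set W}) (u p z : W) (f : W -> V) :
  u \notin S -> p \in S -> z != p -> {in S, forall y, eT u y -> y = p} ->
  ~~ eG (f p) (f z) ->
  (z \in S -> {in S, forall y, eT z y -> ~~ eG (f u) (f y)}) ->
  packs_on S f -> packs_on (u |: S) (fun w => f (tperm u z w)).
Proof.
move=> uS pS zp u_nbr fpz z_ok [injf packS].
split=> [x y /injf /perm_inj // | ].
have fixed w : w \in S -> w != z -> tperm u z w = w.
  by move=> wS wz; apply: tpermD; [apply: contraNneq uS => -> | rewrite eq_sym].
have pz : p != z by rewrite eq_sym.
have moved x y : x \in u |: S -> y \in u |: S -> eT x y -> (x == u) || (x == z) ->
    ~~ eG (f (tperm u z x)) (f (tperm u z y)).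
  move=> /setU1P[-> | xS] /setU1P[-> | yS]; first by rewrite Tirr.
  - by move=> euy _; rewrite (u_nbr y yS euy) tpermL fixed // Gsym.
  - move=> exu /orP[/eqP xu | /eqP xz]; first by rewrite -xu xS in uS.
    by move: zp; rewrite -xz (u_nbr x xS) ?eqxx // Tsym.
  - move=> exy /orP[/eqP xu | /eqP xz]; first by rewrite -xu xS in uS.
    subst x; rewrite tpermR fixed //; first exact: z_ok.
    by apply: contraTneq exy => ->; rewrite Tirr.
move=> x y xS yS exy; have [x_moved | x_fixed] := boolP ((x == u) || (x == z)).
  exact: moved.
have [y_moved | y_fixed] := boolP ((y == u) || (y == z)).
  by rewrite Gsym moved // Tsym.
move: x_fixed y_fixed; rewrite !negb_or => /andP[xu xz] /andP[yu yz].
have inS w : w \in u |: S -> w != u -> w \in S by case/setU1P => [-> /eqP|].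
by rewrite !fixed ?inS //; apply: packS; rewrite ?inS.
Qed.

Hypotheses (Tconn : connected_graph eT) (Tcard : #|edges eT| = #|W| - 1).
Hypothesis degree_bound : 3 * max_deg eG + leaves eT < #|W| + 2.

Lemma card_preim_nbhd_le (f : W -> V) x : injective f -> #|f @^-1: nbhd eG x| <= max_deg eG.
Proof. by move=> injf; rewrite (leq_trans (card_preimset_le _ injf)) ?leq_bigmax. Qed.

Definition blocked (f : W -> V) (u p : W) : {set W} :=
  p |: (f @^-1: nbhd eG (f p) :|: (\bigcup_(y in f @^-1: nbhd eG (f u)) nbhd eT y) :\ u).

Lemma card_blocked_lt f u p :
  injective f -> eT u p -> eG (f u) (f p) -> #|blocked f u p| < #|W|.
Proof.
move=> injf eup fup.
have W_gt1 : 1 < #|W|.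
  have up : u != p by apply: contraTneq eup => ->; rewrite Tirr.
  by rewrite (leq_trans _ (max_card [set u; p])) // cards2 up.
set P := f @^-1: nbhd eG (f p); set B := f @^-1: nbhd eG (f u).
set N := \bigcup_(y in B) nbhd eT y.
have uN : u \in N by apply/bigcupP; exists p; rewrite !inE // Tsym.
have cardN : #|N :\ u| + 1 <= \sum_(y in B) deg eT y.
  by apply: leq_trans (card_bigcup_le _ _); rewrite (cardsD1 u N) uN addnC.
have cardP : #|P| <= max_deg eG := card_preim_nbhd_le (f p) injf.
have cardB : #|B| <= max_deg eG := card_preim_nbhd_le (f u) injf.
have := sum_deg_in_le Tirr Tconn Tcard B W_gt1.
have := (leq_card_setU P (N :\ u)).1.
rewrite /blocked -/P -/B -/N cardsU1.
set n := #|W|.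
case: (_ \notin _) => /=; lia.
Qed.

Lemma exists_unblocked f u p :
  injective f -> eT u p -> exists z, z \notin blocked f u p.
Proof.
move=> injf eup; have [fup | nfup] := boolP (eG (f u) (f p)).
  have /set0Pn[z] : ~: blocked f u p != set0.
    by rewrite -card_gt0 cardsCs setCK subn_gt0 card_blocked_lt.
  by rewrite inE; exists z.
exists u; rewrite !inE eqxx orbF Gsym (negbTE nfup) orbF.
by apply: contraTneq eup => ->; rewrite Tirr.
Qed.

Lemma packs_on_setU1_pendant (S : {set W}) (u p : W) (f : W -> V) :
  u \notin S -> p \in S -> eT u p -> {in S, forall y, eT u y -> y = p} ->
  packs_on S f -> exists g, packs_on (u |: S) g.
Proof.
move=> uS pS eup u_nbr packS; have [z] := exists_unblocked packS.1 eup.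
rewrite !inE !negb_or => /and3P[zp fpz z_unblocked].
exists (fun w => f (tperm u z w)); apply: (packs_on_setU1_swap (p := p)) => // zS y yS ezy.
apply: contra z_unblocked => fuy; rewrite (memPn uS) //=.
by apply/bigcupP; exists y; rewrite !inE // Tsym.
Qed.

Lemma packs_on_all (S : {set W}) : #|W| <= #|V| -> exists f, packs_on S f.
Proof.
move=> leWV; have [k] := ubnP #|S|; elim: k S => // k IH S ltSk.
have [-> | S_neq0] := eqVneq S set0; first exact: packs_on_set0.
have [u uS deg_u] := exists_pendant_in Tirr Tconn Tcard S_neq0.
have [f packS'] : exists f, packs_on (S :\ u) f.
  by apply: IH; rewrite (cardsD1 u) uS in ltSk.
rewrite -(setD1K uS).
have [/exists_inP[p pS' eup] | /exists_inPn u_isol] := boolP [exists p in S :\ u, eT u p].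
  apply: (packs_on_setU1_pendant (p := p)) packS'; rewrite ?setD11 // => y yS' euy.
  have in_nbhdS w : w \in S :\ u -> eT u w -> w \in nbhd eT u :&: S.
    by rewrite !inE => /andP[_ ->] ->.
  by move/card_le1_eqP: deg_u => /(_ p y (in_nbhdS p pS' eup) (in_nbhdS y yS' euy)).
by exists f; apply: packs_on_setU1_isolated.
Qed.

End Packing.

Theorem corollary9 (n : nat) (V W : finType) (eG : rel V) (eT : rel W) :
  #|V| = n -> #|W| = n ->
  simple_graph eG -> is_tree eT ->
  3 * max_deg eG + leaves eT < n + 2 ->
  pack eG eT.
Proof.
move=> cardV cardW [Gsym _] [[Tsym Tirr] [Tconn Tcard]] bound.
rewrite -cardW in bound; have leWV : #|W| <= #|V| by rewrite cardV cardW.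
have [f [injf packT]] := packs_on_all Gsym Tsym Tirr Tconn Tcard bound [set: W] leWV.
by exists f; split=> // x y; apply: packT; rewrite inE.
Qed.
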